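(* Let $A,B$ be nilpotent $n\times n$ complex matrices in Jordan normal form, and let $\xi>0$. If there exists an invertible matrix $C$ with $\|C\|,\|C^{-1}\|\le\xi$ such that $\|AC-CB\|=\varepsilon<\frac{1}{n\cdot n!\,\xi^n}$, then $A$ and $B$ have the same Jordan structure, i.e. for every $k\ge1$ they have the same number of Jordan blocks of dimension $k$.
   Context: $\|\cdot\|$ denotes the operator norm on $n\times n$ matrices. *)

From HB Require Import structures.
From mathcomp Require Import all_boot all_order all_algebra.
From mathcomp Require Import complex.
From mathcomp Require Import boolp classical_sets reals.
Set Implicit Arguments. Unset Strict Implicit. Unset Printing Implicit Defensive.
Import Order.TTheory GRing.Theory Num.Theory.
Local Open Scope ring_scope.

Definition vnorm (R : realType) (n : nat) (x : 'cV[R[i]]_n) : R :=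
  Num.sqrt (\sum_(i < n) ((@complex.Re R (x i 0)) ^+ 2 + (@complex.Im R (x i 0)) ^+ 2)).

Definition opnorm (R : realType) (n : nat) (M : 'M[R[i]]_n) : R :=
  reals.sup [set r : R | exists x : 'cV[R[i]]_n, vnorm x <= 1 /\ r = vnorm (M *m x)]%classic.

Definition block_starts (s : seq nat) : seq nat :=
  [seq sumn (take k s) | k <- iota 0 (size s)].

(* The nilpotent Jordan matrix with Jordan blocks J_{s_1}(0), ..., J_{s_m}(0)
   placed along the diagonal in this order: entry (i, i+1) equals 1 exactly
   when i and i+1 lie in the same block; all other entries are 0. *)
Definition jordan_nil (R : realType) (n : nat) (s : seq nat) : 'M[R[i]]_n :=
  \matrix_(i < n, j < n)
    (if ((j : nat) == i.+1) && (i.+1 \notin block_starts s) then 1 else 0).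

Definition nil_jordan_form (R : realType) (n : nat) (A : 'M[R[i]]_n)
    (s : seq nat) : Prop :=
  [/\ all (fun k => 0 < k)%N s, sumn s = n & A = jordan_nil R n s].

From HB Require Import structures.
From mathcomp Require Import all_boot all_order all_algebra.
From mathcomp Require Import complex.
From mathcomp Require Import boolp classical_sets reals.
From mathcomp Require Import ring lra zify.
Set Implicit Arguments. Unset Strict Implicit. Unset Printing Implicit Defensive.
Import Order.TTheory GRing.Theory Num.Theory.
Local Open Scope ring_scope.

(* The [k]-th power of a nilpotent Jordan matrix with block sizes [s] is a partial
   isometry of rank [r_k = \sum_(b <- s) (b - k)], and the number of blocks of size
   [k > 0] is the second difference [r_(k-1) - 2 r_k + r_(k+1)]; so it suffices to show
   [rank A^j = rank B^j] for [j <= n].  With [E_j := A^j C - C B^j], the identity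
   [E_(j+1) = A E_j + E_1 B^j] and contractivity of Jordan matrices give
   [|E_j| <= j eps], hence [C^-1 A^j C] is within [xi j eps < 1] of [B^j] and
   [C B^j C^-1] within [xi j eps] of [A^j].  A matrix [Q] at distance [< 1] from a
   partial isometry [P] kills no nonzero vector of the initial space of [P], so
   [rank P <= rank Q]; conjugation preserves rank. *)

Lemma quadratic_ge0_discr (R : realFieldType) (a b c : R) :
  0 <= a -> (forall t, 0 <= a * t ^+ 2 + 2 * b * t + c) -> b ^+ 2 <= a * c.
Proof.
move=> a_ge0 ge0_at; have c_ge0 := ge0_at 0.
have [a0|a_gt0] := eqVneq a 0; last first.
  have bab : (- b / a) * a = - b by rewrite divfK.
  have := ge0_at (- b / a); nra.
move: ge0_at; rewrite a0 mul0r; have [->|b_neq0] := eqVneq b 0.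
  by rewrite expr0n.
move=> /(_ (- (c + 1) / (2 * b))); rewrite mulrA [2 * b * _]mulrC divfK; first lra.
by rewrite mulf_neq0 ?pnatr_eq0.
Qed.

Section VectorNorm.
Variable R : realType.
Local Notation C := R[i].

Definition sqnormc (z : C) : R := complex.Re z ^+ 2 + complex.Im z ^+ 2.
Definition sqvnorm n (x : 'cV[C]_n) : R := \sum_i sqnormc (x i 0).
Definition rdot n (x y : 'cV[C]_n) : R :=
  \sum_i (complex.Re (x i 0) * complex.Re (y i 0) + complex.Im (x i 0) * complex.Im (y i 0)).

Lemma sqnormc_ge0 z : 0 <= sqnormc z.
Proof. by rewrite addr_ge0 ?sqr_ge0. Qed.

Lemma sqnormc0 : sqnormc 0 = 0.
Proof. by rewrite /sqnormc /= expr0n addr0. Qed.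

Lemma sqnormcM u v : sqnormc (u * v) = sqnormc u * sqnormc v.
Proof. by case: u v => a b [c d]; rewrite /sqnormc /=; ring. Qed.

Lemma sqnormc_eq0 z : (sqnormc z == 0) = (z == 0).
Proof.
case: z => a b; rewrite /sqnormc paddr_eq0 ?sqr_ge0 // !sqrf_eq0.
by rewrite eq_complex.
Qed.

Lemma sqvnorm_ge0 n (x : 'cV[C]_n) : 0 <= sqvnorm x.
Proof. by rewrite sumr_ge0 // => i _; apply: sqnormc_ge0. Qed.

Lemma vnormE n (x : 'cV[C]_n) : vnorm x = Num.sqrt (sqvnorm x).
Proof. by []. Qed.

Lemma vnorm_ge0 n (x : 'cV[C]_n) : 0 <= vnorm x.
Proof. exact: sqrtr_ge0. Qed.

Lemma rdot_cauchy_schwarz n (x y : 'cV[C]_n) : rdot x y ^+ 2 <= sqvnorm x * sqvnorm y.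
Proof.
apply: quadratic_ge0_discr; first exact: sqvnorm_ge0.
move=> t; have -> : sqvnorm x * t ^+ 2 + 2 * rdot x y * t + sqvnorm y =
    \sum_i ((t * complex.Re (x i 0) + complex.Re (y i 0)) ^+ 2
            + (t * complex.Im (x i 0) + complex.Im (y i 0)) ^+ 2).
  rewrite /sqvnorm /rdot mulr_sumr !mulr_suml -!big_split /=.
  by apply: eq_bigr => i _; rewrite /sqnormc; ring.
by apply: sumr_ge0 => i _; rewrite addr_ge0 ?sqr_ge0.
Qed.

Lemma sqvnormD n (x y : 'cV[C]_n) : sqvnorm (x + y) = sqvnorm x + sqvnorm y + 2 * rdot x y.
Proof.
rewrite /sqvnorm /rdot mulr_sumr -!big_split /=; apply: eq_bigr => i _.
by rewrite mxE; case: (x i 0) (y i 0) => a b [c d]; rewrite /sqnormc /=; ring.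
Qed.

Lemma vnormD n (x y : 'cV[C]_n) : vnorm (x + y) <= vnorm x + vnorm y.
Proof.
rewrite -(ler_pXn2r (_ : 0 < 2)%N) ?nnegrE ?addr_ge0 ?vnorm_ge0 //.
have rdot_le : rdot x y <= vnorm x * vnorm y.
  rewrite !vnormE -sqrtrM ?sqvnorm_ge0 // (le_trans (ler_norm _)) //.
  by rewrite -sqrtr_sqr ler_sqrt ?mulr_ge0 ?sqvnorm_ge0 ?rdot_cauchy_schwarz.
rewrite sqrrD !vnormE !sqr_sqrtr ?sqvnorm_ge0 // sqvnormD -!vnormE; lra.
Qed.

Lemma vnormZ n (c : C) (x : 'cV[C]_n) : vnorm (c *: x) = Num.sqrt (sqnormc c) * vnorm x.
Proof.
rewrite !vnormE -sqrtrM ?sqnormc_ge0 // /sqvnorm mulr_sumr.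
by congr Num.sqrt; apply: eq_bigr => i _; rewrite mxE sqnormcM.
Qed.

Lemma vnormN n (x : 'cV[C]_n) : vnorm (- x) = vnorm x.
Proof.
rewrite -scaleN1r vnormZ (_ : sqnormc (-1) = 1) ?sqrtr1 ?mul1r //.
by rewrite /sqnormc /=; ring.
Qed.

Lemma vnorm0 n : vnorm (0 : 'cV[C]_n) = 0.
Proof. by rewrite vnormE /sqvnorm big1 ?sqrtr0 // => i _; rewrite mxE sqnormc0. Qed.

Lemma vnorm_eq0 n (x : 'cV[C]_n) : (vnorm x == 0) = (x == 0).
Proof.
apply/idP/eqP => [|->]; last by rewrite vnorm0.
rewrite vnormE sqrtr_eq0 => x_le0.
have : sqvnorm x == 0 by rewrite eq_le x_le0 sqvnorm_ge0.
rewrite psumr_eq0 => [/allP x0|i _]; last exact: sqnormc_ge0.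
apply/matrixP => i j; rewrite (ord1 j) mxE; apply/eqP.
by rewrite -sqnormc_eq0; apply: x0 (mem_index_enum i).
Qed.

Lemma vnorm_sum n (I : finType) (F : I -> 'cV[C]_n) :
  vnorm (\sum_i F i) <= \sum_i vnorm (F i).
Proof.
apply: (big_ind2 (fun x y => vnorm x <= y)) => //; first by rewrite vnorm0.
by move=> x1 y1 x2 y2 le1 le2; rewrite (le_trans (vnormD _ _)) ?lerD.
Qed.

Lemma sqnormc_sum_pred_le1 (I : finType) (P : pred I) (F : I -> C) :
    (forall i j, P i -> P j -> i = j) ->
  sqnormc (\sum_(i | P i) F i) = \sum_(i | P i) sqnormc (F i).
Proof.
move=> P_le1; have [i Pi|P0] := pickP P; last by rewrite !big_pred0 // sqnormc0.
by rewrite !(big_pred1 i) // => j; apply/idP/eqP => [Pj|->//]; apply: P_le1.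
Qed.

End VectorNorm.

Section OperatorNorm.
Variable R : realType.
Local Notation C := R[i].

Lemma opnorm_has_sup n (M : 'M[C]_n) :
  has_sup [set r : R | exists x : 'cV[C]_n, vnorm x <= 1 /\ r = vnorm (M *m x)]%classic.
Proof.
split; first by exists (vnorm (M *m 0)), 0; rewrite vnorm0.
exists (\sum_j vnorm (col j M)) => _ [x [x_le1 ->]].
have -> : M *m x = \sum_j x j 0 *: col j M.
  apply/matrixP => i k; rewrite !mxE summxE; apply: eq_bigr => j _.
  by rewrite !mxE (ord1 k) mulrC.
rewrite (le_trans (vnorm_sum _)) // ler_sum // => j _.
rewrite vnormZ ler_piMl ?vnorm_ge0 // (le_trans _ x_le1) // ler_sqrt ?sqvnorm_ge0 //.
by rewrite /sqvnorm (bigD1 j) //= lerDl sumr_ge0 // => i _; apply: sqnormc_ge0.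
Qed.

Lemma opnorm_ge0 n (M : 'M[C]_n) : 0 <= opnorm M.
Proof.
apply: (sup_upper_bound (opnorm_has_sup M)).
by exists 0; rewrite vnorm0 mulmx0 vnorm0.
Qed.

Lemma vnorm_mulmx_le n (M : 'M[C]_n) (x : 'cV[C]_n) : vnorm (M *m x) <= opnorm M * vnorm x.
Proof.
have [x0|x_neq0] := eqVneq x 0; first by rewrite x0 mulmx0 vnorm0 mulr0.
have x_gt0 : 0 < vnorm x by rewrite lt_def vnorm_eq0 x_neq0 vnorm_ge0.
pose c : C := ((vnorm x)^-1)%:C%C.
have vnormZc y : vnorm (c *: y) = (vnorm x)^-1 * vnorm y.
  by rewrite vnormZ /sqnormc /= expr0n addr0 sqrtr_sqr ger0_norm ?invr_ge0 ?vnorm_ge0.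
have : vnorm (M *m (c *: x)) <= opnorm M.
  apply: (sup_upper_bound (opnorm_has_sup M)).
  by exists (c *: x); rewrite vnormZc mulVf ?gt_eqF.
by rewrite -scalemxAr vnormZc mulrC ler_pdivrMr.
Qed.

Lemma opnorm_unit_ge1 n (M : 'M[C]_n) :
  (0 < n)%N -> M \in unitmx -> 1 <= opnorm M * opnorm (invmx M).
Proof.
move=> n_gt0 M_unit; pose e : 'cV[C]_n := delta_mx (Ordinal n_gt0) 0.
have e_gt0 : 0 < vnorm e.
  rewrite lt_def vnorm_ge0 vnorm_eq0 andbT; apply/eqP => /matrixP/(_ (Ordinal n_gt0) 0).
  by rewrite !mxE eqxx => /eqP; rewrite oner_eq0.
rewrite -(ler_pM2r e_gt0) mul1r -mulrA -{1}[e]mul1mx -(mulmxV M_unit) -mulmxA.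
by rewrite (le_trans (vnorm_mulmx_le _ _)) // ler_wpM2l ?opnorm_ge0 ?vnorm_mulmx_le.
Qed.

End OperatorNorm.

Section Rank.
Variable F : fieldType.

Lemma rank_diag_pred n (d : pred 'I_n) :
  \rank (\matrix_(i, j) (if (i == j) && d j then 1 else 0) : 'M[F]_n) = #|d|.
Proof.
set D := \matrix_(i, j) _.
have rowD i : row i D = if d i then delta_mx 0 i else 0.
  apply/matrixP => a b; rewrite (ord1 a) !mxE; have [<-|ne] := eqVneq i b.
    by case: (d i); rewrite ?mxE ?eqxx.
  by case: (d i); rewrite ?mxE // eq_sym (negbTE ne) andbF.
have D_eqmx : (D == \sum_(i | d i) <<delta_mx 0 i : 'rV[F]_n>>)%MS.
  apply/andP; split.
    apply/row_subP => i; rewrite rowD; case: ifP => di; last exact: sub0mx.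
    by apply: (sumsmx_sup i) => //; rewrite genmxE.
  apply/sumsmx_subP => i di; rewrite genmxE.
  by have := row_sub i D; rewrite rowD di.
rewrite (eqmx_rank D_eqmx).
have /mxdirectP -> := @mxdirect_delta F _ d n id (in2W (@inj_id _)).
by rewrite /= -sum1_card; apply: eq_bigr => i _; rewrite mxrank_gen mxrank_delta.
Qed.

Lemma mxrank_leq_ker m n p (X : 'M[F]_(m, n)) (Y : 'M[F]_(p, n)) :
  (forall z : 'cV[F]_n, X *m z = 0 -> Y *m z = 0) -> (\rank Y <= \rank X)%N.
Proof.
move=> kerXY.
have kerT_sub : (kermx X^T <= kermx Y^T)%MS.
  apply/row_subP => i; apply/sub_kermxP; apply: trmx_inj; rewrite trmx_mul trmxK trmx0.
  apply: kerXY; have /(congr1 trmx) : row i (kermx X^T) *m X^T = 0.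
    by rewrite -row_mul mulmx_ker row0.
  by rewrite trmx_mul trmxK trmx0.
have := mxrankS kerT_sub; rewrite !mxrank_ker !mxrank_tr.
by have := rank_leq_col X; have := rank_leq_col Y; lia.
Qed.

End Rank.

Lemma rank_le_near_partial_isometry (R : realType) n (P D Q : 'M[R[i]]_n) c :
    (forall z, vnorm (P *m (D *m z)) = vnorm (D *m z)) ->
    (forall y, vnorm ((P - Q) *m y) <= c * vnorm y) -> c < 1 ->
  (\rank D <= \rank Q)%N.
Proof.
move=> P_iso PQ_le c_lt1; apply: leq_trans (mxrankM_maxl Q D).
apply: mxrank_leq_ker => z QDz0; apply/eqP; rewrite -vnorm_eq0; apply/eqP.
have QDz0' : Q *m (D *m z) = 0 by rewrite mulmxA.
have := vnorm_ge0 (D *m z).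
have : vnorm (D *m z) <= c * vnorm (D *m z).
  by rewrite -{1}P_iso -[P *m _]subr0 -QDz0' -mulmxBl PQ_le.
nra.
Qed.

(* [linked s m]: positions [m.-1] and [m] lie in the same block of [s] (for [0 < m]). *)
Definition linked (s : seq nat) (m : nat) : bool := m \notin block_starts s.

Definition reach (lk : nat -> bool) (k j : nat) : bool :=
  (k <= j)%N && all lk (iota (j - k).+1 k).

Definition powrank (s : seq nat) (k : nat) : nat := sumn [seq (b - k)%N | b <- s].

Lemma block_starts_cons b s :
  block_starts (b :: s) = 0%N :: map (addn b) (block_starts s).
Proof.
rewrite /block_starts /= -map_comp; congr (_ :: _).
by rewrite (iotaDl 1 0) -map_comp; apply: eq_map.
Qed.

Lemma count_leq_iota k m : count (leq k) (iota 0 m) = (m - k)%N.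
Proof.
elim: m => [|m IHm] //; rewrite -addn1 iotaD count_cat IHm /= addn0.
by case: (leqP k m); lia.
Qed.

Lemma linked_cons b s m :
  linked (b :: s) m = (0 < m)%N && ((m < b)%N || linked s (m - b)).
Proof.
rewrite /linked block_starts_cons inE negb_or lt0n; case: (ltnP m b) => [m_lt|b_le] /=.
  by rewrite (_ : m \notin _) ?andbT //; apply/negP => /mapP[y _]; lia.
by rewrite -[X in X \in map _ _](subnKC b_le) mem_map //; apply: addnI.
Qed.

Lemma reach_linked_cons_lt b s k j :
  (j < b)%N -> reach (linked (b :: s)) k j = (k <= j)%N.
Proof.
rewrite /reach => j_lt; case: leqP => //= k_le; apply/allP => m.
rewrite mem_iota linked_cons => /andP[m_gt m_lt].
by apply/andP; split; [|apply/orP; left]; lia.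
Qed.

Lemma reach_linked_cons_addn b s k j :
  (j < sumn s)%N -> reach (linked (b :: s)) k (b + j) = reach (linked s) k j.
Proof.
rewrite /reach => j_lt; case: (leqP k j) => [k_le|j_lt_k] /=.
  have -> : (b + j - k).+1 = (b + (j - k).+1)%N by lia.
  rewrite (leq_trans k_le (leq_addl b j)).
  rewrite iotaDl all_map; apply: eq_in_all => m; rewrite mem_iota => /andP[m_gt _] /=.
  have m_gt0 : (0 < m)%N by lia.
  by rewrite linked_cons addKn [(b + m < b)%N]ltnNge leq_addr addn_gt0 m_gt0 orbT.
case: leqP => //= b_le; apply/negbTE/allPn; exists b.
  by rewrite mem_iota; apply/andP; split; lia.
case: s j_lt => // c s _; rewrite linked_cons subnn ltnn /linked block_starts_cons inE.
by rewrite eqxx andbF.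
Qed.

Lemma count_reach_linked s k : count (reach (linked s) k) (iota 0 (sumn s)) = powrank s k.
Proof.
elim: s => [|b s IHs] //=.
have -> : iota 0 (b + sumn s) = iota 0 b ++ map (addn b) (iota 0 (sumn s)).
  by rewrite iotaD -iotaDl addn0.
rewrite count_cat count_map /powrank /= -/(powrank s k) -IHs -count_leq_iota.
congr addn; apply: eq_in_count => j; rewrite mem_iota => /andP[_ j_lt].
  exact: reach_linked_cons_lt.
exact: reach_linked_cons_addn.
Qed.

Lemma powrank_eq0 s k : (sumn s <= k)%N -> powrank s k = 0%N.
Proof.
elim: s => [|b s IHs] //= sum_le; rewrite /powrank /= -/(powrank s k) IHs; last by lia.
by rewrite (_ : b - k = 0)%N //; lia.
Qed.

Lemma powrank_second_diff s k : (0 < k)%N ->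
  (powrank s k.-1 + powrank s k.+1 = 2 * powrank s k + count_mem k s)%N.
Proof.
move=> k_gt0; elim: s => [|b s IHs] //=; rewrite /powrank /= -!/(powrank s _).
move: IHs; set p0 := powrank s k; set p1 := powrank s k.-1; set p2 := powrank s k.+1.
by case: (eqVneq b k) => [->|/eqP b_neq_k] /=; lia.
Qed.

Section ShiftMatrices.
Variables (R : realType) (n : nat) (lk : nat -> bool).
Local Notation C := R[i].

Definition shift_rel k (i j : 'I_n) : bool := ((j : nat) == i + k)%N && all lk (iota i.+1 k).

Definition shift_mx k : 'M[C]_n := \matrix_(i, j) (if shift_rel k i j then 1 else 0).

Definition reach_mx k : 'M[C]_n := \matrix_(i, j) (if (i == j) && reach lk k j then 1 else 0).

Lemma shift_relE k i j : shift_rel k i j = ((i : nat) == j - k)%N && reach lk k j.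
Proof.
rewrite /shift_rel /reach; have [->|j_neq] := eqVneq (j : nat) (i + k)%N.
  by rewrite addnK eqxx leq_addl.
by case: eqP => [i_eq|//]; case: leqP => //= k_le; move: j_neq; rewrite i_eq subnK ?eqxx.
Qed.

Lemma shift_mx0 : shift_mx 0 = 1.
Proof.
apply/matrixP => i j; rewrite !mxE /shift_rel addn0 andbT.
by rewrite val_eqE eq_sym; case: (i == j).
Qed.

Lemma shift_mxSr k : shift_mx k *m shift_mx 1 = shift_mx k.+1.
Proof.
apply/matrixP => i j; rewrite [LHS]mxE [RHS]mxE /shift_rel.
rewrite -(addn1 k) iotaD all_cat /= andbT addSn addnA addn1.
have [ik_lt|ik_ge] := ltnP (i + k) n.
  rewrite (bigD1 (Ordinal ik_lt)) //= big1 => [|l l_neq]; last first.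
    rewrite mxE /shift_rel (_ : ((l : nat) == i + k)%N = false) ?mul0r //.
    by apply: contraNF l_neq => /eqP l_eq; apply/eqP/val_inj.
  rewrite !mxE /shift_rel /= eqxx addr0 andbT addn1.
  by case: (all lk _); case: (lk _); case: (_ == _); rewrite ?mulr1 ?mulr0.
rewrite big1 => [|l _]; last first.
  rewrite mxE /shift_rel; case: eqP => [l_eq|]; last by rewrite mul0r.
  by have := ltn_ord l; lia.
by case: eqP => // j_eq; have := ltn_ord j; lia.
Qed.

Lemma shift_mxX k : shift_mx 1 ^+ k = shift_mx k.
Proof. by elim: k => [|k IHk]; rewrite ?expr0 ?shift_mx0 // exprSr IHk -mulmxE shift_mxSr. Qed.

Lemma shift_mx_reach k : shift_mx k *m reach_mx k = shift_mx k.
Proof.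
apply/matrixP => i j; rewrite mxE (bigD1 j) //= big1 => [|l l_neq]; last first.
  by rewrite [reach_mx _ _ _]mxE (negbTE l_neq) mulr0.
rewrite !mxE eqxx addr0 shift_relE.
by case: (_ == _); case: (reach lk k j); rewrite ?mulr1 ?mulr0.
Qed.

Lemma reach_mx_mulvec k (x : 'cV[C]_n) j :
  (reach_mx k *m x) j 0 = if reach lk k j then x j 0 else 0.
Proof.
rewrite mxE (bigD1 j) //= big1 => [|l l_neq]; last by rewrite mxE eq_sym (negbTE l_neq) mul0r.
by rewrite mxE eqxx addr0; case: (reach lk k j); rewrite ?mul1r ?mul0r.
Qed.

Lemma sqvnorm_reach_mx k (x : 'cV[C]_n) :
  sqvnorm (reach_mx k *m x) = \sum_(j < n) (if reach lk k j then sqnormc (x j 0) else 0).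
Proof.
by apply: eq_bigr => j _; rewrite reach_mx_mulvec; case: (reach lk k j); rewrite ?sqnormc0.
Qed.

(* Each row and each column of [shift_mx k] has at most one nonzero entry, equal to [1]. *)
Lemma sqvnorm_shift_mx k (x : 'cV[C]_n) :
  sqvnorm (shift_mx k *m x) = \sum_(j < n) (if reach lk k j then sqnormc (x j 0) else 0).
Proof.
have row_le1 i : sqnormc ((shift_mx k *m x) i 0) = \sum_(j | shift_rel k i j) sqnormc (x j 0).
  rewrite mxE -sqnormc_sum_pred_le1 => [|j l /andP[/eqP j_eq _] /andP[/eqP l_eq _]].
    congr sqnormc; rewrite [RHS]big_mkcond; apply: eq_bigr => j _.
    by rewrite mxE; case: ifP; rewrite ?mul1r ?mul0r.
  by apply: ord_inj; rewrite j_eq l_eq.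
rewrite /sqvnorm (eq_bigr _ (fun i _ => row_le1 i)) (exchange_big_dep xpredT) //=.
apply: eq_bigr => j _; case: ifP => reach_j; last first.
  by rewrite big_pred0 // => i; rewrite shift_relE reach_j andbF.
have jk_lt : (j - k < n)%N by rewrite (leq_ltn_trans (leq_subr k j)).
by rewrite (big_pred1 (Ordinal jk_lt)) // => i; rewrite shift_relE reach_j andbT.
Qed.

Lemma vnorm_shift_mx_le k (x : 'cV[C]_n) : vnorm (shift_mx k *m x) <= vnorm x.
Proof.
rewrite !vnormE ler_sqrt ?sqvnorm_ge0 // sqvnorm_shift_mx ler_sum // => j _.
by case: ifP => _; rewrite ?sqnormc_ge0.
Qed.

Lemma vnorm_shift_mx_reach k (x : 'cV[C]_n) :
  vnorm (shift_mx k *m (reach_mx k *m x)) = vnorm (reach_mx k *m x).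
Proof.
rewrite !vnormE sqvnorm_shift_mx sqvnorm_reach_mx; congr Num.sqrt.
by apply: eq_bigr => j _; rewrite reach_mx_mulvec; case: (reach lk k j).
Qed.

Lemma rank_reach_mx_le k (Q : 'M[C]_n) c :
    (forall y, vnorm ((shift_mx k - Q) *m y) <= c * vnorm y) -> c < 1 ->
  (\rank (reach_mx k) <= \rank Q)%N.
Proof. exact/rank_le_near_partial_isometry/vnorm_shift_mx_reach. Qed.

Lemma rank_shift_mx k : \rank (shift_mx k) = \rank (reach_mx k).
Proof.
apply/eqP; rewrite eqn_leq -{1}shift_mx_reach mxrankM_maxr.
by apply: (@rank_reach_mx_le k _ 0) => [y|]; rewrite ?subrr ?mul0mx ?vnorm0 ?mul0r ?ltr01.
Qed.

Lemma rank_reach_mx k : \rank (reach_mx k) = count (reach lk k) (iota 0 n).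
Proof.
rewrite rank_diag_pred -sum1_card -sum1_count.
by rewrite -(big_mkord (reach lk k) (fun _ => 1%N)) /index_iota subn0.
Qed.

End ShiftMatrices.

Lemma jordan_nilE (R : realType) n s : jordan_nil R n s = shift_mx R n (linked s) 1.
Proof. by apply/matrixP => i j; rewrite !mxE /shift_rel addn1 /= andbT. Qed.

Lemma rank_jordan_nilX (R : realType) n s k :
  sumn s = n -> \rank (jordan_nil R n s ^+ k) = powrank s k.
Proof.
by move=> <-; rewrite jordan_nilE shift_mxX rank_shift_mx rank_reach_mx count_reach_linked.
Qed.

Lemma vnorm_intertwine_expr_le (R : realType) n (A B X : 'M[R[i]]_n) k :
    (forall x, vnorm (A *m x) <= vnorm x) -> (forall x, vnorm (B *m x) <= vnorm x) ->
  forall y,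
  vnorm ((A ^+ k *m X - X *m B ^+ k) *m y) <= k%:R * opnorm (A *m X - X *m B) * vnorm y.
Proof.
move=> A_le B_le; have B_powle j x : vnorm (B ^+ j *m x) <= vnorm x.
  elim: j x => [|j IHj] x; first by rewrite expr0 mul1mx.
  by rewrite exprSr -mulmxE -mulmxA (le_trans (IHj _)).
elim: k => [|k IHk] y; first by rewrite !expr0 mul1mx mulmx1 subrr mul0mx vnorm0 !mul0r.
have -> : A ^+ k.+1 *m X - X *m B ^+ k.+1 =
    A *m (A ^+ k *m X - X *m B ^+ k) + (A *m X - X *m B) *m B ^+ k.
  by rewrite !exprS -!mulmxE mulmxBr mulmxBl !mulmxA addrA subrK.
rewrite mulmxDl (le_trans (vnormD _ _)) // -!mulmxA mulrSr mulrDl mulrDl mul1r.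
apply: lerD; first exact: le_trans (A_le _) (IHk _).
by rewrite (le_trans (vnorm_mulmx_le _ _)) // ler_wpM2l ?opnorm_ge0.
Qed.

Lemma rank_shift_mx_eq_intertwine (R : realType) n (lkA lkB : nat -> bool) k
    (X : 'M[R[i]]_n) xi delta :
    X \in unitmx -> opnorm (invmx X) <= xi -> 0 <= delta -> xi * delta < 1 ->
    (forall y, vnorm ((shift_mx R n lkA k *m X - X *m shift_mx R n lkB k) *m y)
               <= delta * vnorm y) ->
  \rank (shift_mx R n lkA k) = \rank (shift_mx R n lkB k).
Proof.
set P := shift_mx R n lkA k; set P' := shift_mx R n lkB k; set E := P *m X - X *m P'.
move=> X_unit Xi_le delta_ge0 small E_le; have xi_ge0 := le_trans (opnorm_ge0 _) Xi_le.
apply/eqP; rewrite eqn_leq; apply/andP; split; rewrite rank_shift_mx.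
  apply: leq_trans (leq_trans (mxrankM_maxl _ (invmx X)) (mxrankM_maxr X P')).
  apply: (rank_reach_mx_le (c := xi * delta)) => // y.
  have -> : P - X *m P' *m invmx X = E *m invmx X.
    by rewrite /E mulmxBl -(mulmxA P) mulmxV // mulmx1.
  rewrite -mulmxA (le_trans (E_le _)) // [xi * _]mulrC -mulrA ler_wpM2l //.
  by rewrite (le_trans (vnorm_mulmx_le _ _)) // ler_wpM2r ?vnorm_ge0.
apply: leq_trans (leq_trans (mxrankM_maxl _ X) (mxrankM_maxr (invmx X) P)).
apply: (rank_reach_mx_le (c := xi * delta)) => // y.
have -> : P' - invmx X *m P *m X = - (invmx X *m E).
  by rewrite /E mulmxBr opprB !mulmxA mulVmx // mul1mx.
rewrite mulNmx vnormN -mulmxA (le_trans (vnorm_mulmx_le _ _)) // -mulrA.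
by rewrite (le_trans (ler_wpM2r (vnorm_ge0 _) Xi_le)) // ler_wpM2l.
Qed.

(* The smallness hypothesis of the theorem is used only through this consequence. *)
Lemma scaled_error_lt1 (R : realFieldType) n j (xi eps : R) :
    1 <= xi -> 0 <= eps -> (j <= n)%N -> eps < ((n * n`!)%:R * xi ^+ n)^-1 ->
  xi * (j%:R * eps) < 1.
Proof.
move=> xi_ge1 eps_ge0 j_le_n; case: n j_le_n => [|n] j_le_n.
  by rewrite mul0n mul0r invr0; lra.
set K := _ * _ => eps_lt; have K_gt0 : 0 < K.
  by rewrite mulr_gt0 ?exprn_gt0 ?ltr0n ?muln_gt0 ?fact_gt0 //; lra.
have xi_j_le : xi * j%:R <= K.
  have xi_le_pow : xi <= xi ^+ n.+1 by rewrite exprS ler_peMr ?exprn_ege1 //; lra.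
  rewrite /K mulrC natrM -mulrA ler_pM ?ler0n ?ler_nat //; first lra.
  by rewrite (le_trans xi_le_pow) // ler_peMl ?exprn_ge0 ?ler1n ?fact_gt0 //; lra.
rewrite mulrA (le_lt_trans (ler_wpM2r eps_ge0 xi_j_le)) // -ltr_pdivlMl //.
by rewrite mulr1.
Qed.

Theorem proposition11 (R : realType) (n : nat) (A B : 'M[R[i]]_n)
    (sA sB : seq nat)
    (hA : nil_jordan_form A sA) (hB : nil_jordan_form B sB)
    (xi : R) (hxi : 0 < xi)
    (C : 'M[R[i]]_n) (hCu : C \in unitmx)
    (hC : opnorm C <= xi) (hCi : opnorm (invmx C) <= xi)
    (heps : opnorm (A *m C - C *m B) < ((n * n`!)%:R * xi ^+ n)^-1) :
  forall k : nat, (0 < k)%N -> count_mem k sA = count_mem k sB.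
Proof.
move=> k k_gt0; case: hA heps => _ sumA ->; case: hB => _ sumB ->.
set eps := opnorm _ => eps_lt.
have powrank_eq j : powrank sA j = powrank sB j.
  have [n_le_j|j_lt_n] := leqP n j; first by rewrite !powrank_eq0 ?sumA ?sumB.
  have xi_ge1 : 1 <= xi.
    have := opnorm_unit_ge1 (leq_ltn_trans (leq0n j) j_lt_n) hCu.
    have := opnorm_ge0 C; have := opnorm_ge0 (invmx C); nra.
  rewrite -(rank_jordan_nilX R j sumA) -(rank_jordan_nilX R j sumB) !jordan_nilE !shift_mxX.
  apply: (rank_shift_mx_eq_intertwine (delta := j%:R * eps) hCu hCi).
  - by rewrite mulr_ge0 ?ler0n ?opnorm_ge0.
  - by apply: scaled_error_lt1 eps_lt; [|exact: opnorm_ge0|exact: ltnW].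
  rewrite -!(shift_mxX _ _ _ j) /eps !jordan_nilE.
  by apply: vnorm_intertwine_expr_le => x; apply: vnorm_shift_mx_le.
have := powrank_second_diff sA k_gt0; have := powrank_second_diff sB k_gt0.
by rewrite !powrank_eq; lia.
Qed.
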